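(* Let $s:N_S\to\ell_2$ be any bijection with $s(n)=ne_1$ for all $n\in\mathbf{N}$, and let $x\oplus_s y=s^{-1}(s(x)+s(y))$. Then it is not the case that $\underbrace{m\oplus_s\cdots\oplus_s m}_{n}=nm$ for all $n\in\mathbf{N}$ and all $m\in N_S$.
   Context: $\mathbf{N}=\{1,2,3,\dots\}$. $\ell_2$ is the Hilbert space of square-summable real sequences and $e_1=(1,0,0,\dots)$. The set $N_S$ of supernatural (Steinitz) numbers consists of formal products $n=\prod_{p} p^{e_p(n)}$ over all primes $p$, with exponents $e_p(n)\in\{0,1,2,\dots\}\cup\{\infty\}$ (possibly infinitely many nonzero); $\mathbf{N}$ is identified with the elements having all exponents finite and only finitely many nonzero. Multiplication is defined by adding exponents, with $\infty+e=\infty$ (so e.g. $2\cdot 2^\infty=2^\infty$ and $3\cdot 2^\infty\ne 2^\infty$). *)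

From mathcomp Require Import all_boot.
From Stdlib Require Import Reals.

Set Implicit Arguments.
Unset Strict Implicit.

(* Extended exponents {0,1,2,...} U {oo}: [Some k] = k, [None] = oo. *)
Definition ext_add (a b : option nat) : option nat :=
  match a, b with
  | Some x, Some y => Some (x + y)%N
  | _, _ => None
  end.

(* Supernatural (Steinitz) numbers: exponent e_p for every prime p;
   non-prime indices are normalised to exponent 0. *)
Definition NS : Type :=
  {e : nat -> option nat | forall p, ~~ prime p -> e p = Some 0%N}.

Definition NS_exp (x : NS) (p : nat) : option nat := proj1_sig x p.

Lemma NS_mul_proof (x y : NS) :
  forall p, ~~ prime p -> ext_add (NS_exp x p) (NS_exp y p) = Some 0%N.
Proof.
move=> p np; rewrite /NS_exp (proj2_sig x p np) (proj2_sig y p np) //.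
Qed.

Definition NS_mul (x y : NS) : NS :=
  exist _ (fun p => ext_add (NS_exp x p) (NS_exp y p)) (NS_mul_proof x y).

Lemma NS_of_nat_proof (n : nat) :
  forall p, ~~ prime p -> (if prime p then Some (logn p n) else Some 0%N) = Some 0%N.
Proof. by move=> p /negbTE ->. Qed.

(* Embedding of N = {1,2,...} into N_S: e_p(n) = p-adic valuation of n.
   (Only used for n >= 1.) *)
Definition NS_of_nat (n : nat) : NS :=
  exist _ (fun p => if prime p then Some (logn p n) else Some 0%N)
        (NS_of_nat_proof n).

Definition l2 (f : nat -> R) : Prop :=
  exists l : R, infinite_sum (fun i => (f i * f i)%R) l.

Definition e1 : nat -> R := fun i => if (i == 0)%N then 1%R else 0%R.

Definition seq_add (f g : nat -> R) : nat -> R := fun i => (f i + g i)%R.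
Definition seq_scale (c : R) (f : nat -> R) : nat -> R := fun i => (c * f i)%R.

(* x (+)_s y = s^{-1}(s x + s y), where sinv is the inverse of s on l_2. *)
Definition oplus_s (s : NS -> nat -> R) (sinv : (nat -> R) -> NS) (x y : NS) : NS :=
  sinv (seq_add (s x) (s y)).

(* iter_oplus s sinv k m = m (+)_s m (+)_s ... (+)_s m with k+1 copies of m. *)
Fixpoint iter_oplus (s : NS -> nat -> R) (sinv : (nat -> R) -> NS) (k : nat) (m : NS) : NS :=
  match k with
  | 0 => m
  | k'.+1 => oplus_s s sinv (iter_oplus s sinv k' m) m
  end.

Definition nfold_oplus s sinv (n : nat) (m : NS) : NS := iter_oplus s sinv n.-1 m.

(* If [2 m = m], then [m (+)_s m = m], so [s m + s m = s m] and [s m = 0].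
   Every supernatural number with [e_2 = oo] is fixed by multiplication by 2,
   e.g. [2^oo] and [3 * 2^oo]; both would be sent to [0], contradicting the
   injectivity of [s]. *)
From mathcomp Require Import all_boot.
From Stdlib Require Import Reals Lra ProofIrrelevance FunctionalExtensionality.

Lemma l2_seq_scale (c : R) (f : nat -> R) : l2 f -> l2 (seq_scale c f).
Proof.
move=> [l Hl]; exists (c * c * l)%R.
have Hcc : Un_cv (fun _ : nat => (c * c)%R) (c * c)%R.
  by move=> eps He; exists 0%N => n _; rewrite /Rdist Rminus_diag Rabs_R0.
apply: Un_cv_ext (CV_mult _ _ _ _ Hcc Hl) => n.
by rewrite scal_sum; apply: sum_eq => i _; rewrite /seq_scale; ring.
Qed.

Lemma seq_add_diag (f : nat -> R) : seq_add f f = seq_scale 2 f.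
Proof. by apply: functional_extensionality => i; rewrite /seq_add /seq_scale; ring. Qed.

Section OplusIdempotent.

Variables (s : NS -> nat -> R) (sinv : (nat -> R) -> NS).
Hypothesis s_in_l2 : forall x, l2 (s x).
Hypothesis s_sinv : forall f, l2 f -> s (sinv f) = f.

Lemma oplus_s_idem_eq0 (x : NS) : oplus_s s sinv x x = x -> s x = (fun _ => 0%R).
Proof.
move=> xx; have sxx : seq_add (s x) (s x) = s x.
  by rewrite -{3}xx /oplus_s s_sinv // seq_add_diag; apply/l2_seq_scale.
apply: functional_extensionality => i.
by have := f_equal (fun g => g i) sxx; rewrite /seq_add; lra.
Qed.

End OplusIdempotent.

Lemma NS_ext (x y : NS) : (forall p, NS_exp x p = NS_exp y p) -> x = y.
Proof.
move=> exy; apply: eq_sig_hprop => [e h1 h2|]; first exact: proof_irrelevance.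
exact: functional_extensionality.
Qed.

Lemma NS_mul2_fixed (m : NS) : NS_exp m 2 = None -> NS_mul (NS_of_nat 2) m = m.
Proof.
move=> m2; apply: NS_ext => p; rewrite /NS_mul /NS_exp /=.
case pp: (prime p); last by rewrite (proj2_sig m p (negbT pp)).
case: (eqVneq p 2) => [-> | p_neq2]; first by rewrite -/(NS_exp m 2) m2.
by rewrite logn_prime //; move/negbTE: p_neq2 => ->; case: (proj1_sig m p).
Qed.

Lemma two_inf_proof :
  forall p, ~~ prime p -> (if p == 2 then None else Some 0) = Some 0%N.
Proof. by move=> p; case: eqP => // ->. Qed.

Definition two_inf : NS :=
  exist _ (fun p => if p == 2 then None else Some 0) two_inf_proof.

Lemma two_inf_neq_mul3 : two_inf <> NS_mul (NS_of_nat 3) two_inf.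
Proof. by move/(f_equal (fun x => NS_exp x 3)). Qed.

Theorem mainTheorem14 (s : NS -> nat -> R) (sinv : (nat -> R) -> NS)
  (s_in_l2 : forall x, l2 (s x))
  (sinv_s : forall x, sinv (s x) = x)
  (s_sinv : forall f, l2 f -> s (sinv f) = f)
  (s_nat : forall n : nat, (1 <= n)%N -> s (NS_of_nat n) = seq_scale (INR n) e1) :
  ~ (forall (n : nat) (m : NS), (1 <= n)%N ->
       nfold_oplus s sinv n m = NS_mul (NS_of_nat n) m).
Proof.
move=> nfold_mul.
have s_eq0 m : NS_exp m 2 = None -> s m = (fun _ => 0%R).
  move=> m2; apply: (oplus_s_idem_eq0 _ _ s_in_l2 s_sinv).
  by have := nfold_mul 2 m isT; rewrite NS_mul2_fixed.
apply: two_inf_neq_mul3.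
by rewrite -[LHS]sinv_s -[RHS]sinv_s !s_eq0.
Qed.
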